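(* For every positive integer $n$, the Chinese monoid $\mathsf{Ch}_n$ satisfies every semigroup identity that is satisfied by the monoid $\mathcal U_2(\mathbb T)$ of $2\times 2$ upper triangular tropical matrices.
   Context: The Chinese monoid of rank $n$ is the monoid $\mathsf{Ch}_n=\langle a_1,\dots,a_n\rangle$ presented by the relations $a_ja_ka_i=a_ka_ja_i=a_ka_ia_j$ for all $1\le i\le j\le k\le n$. The tropical semiring is $\mathbb T=\mathbb R\cup\{-\infty\}$ with addition $\max$ and multiplication $+$; $\mathcal U_2(\mathbb T)$ is the monoid of $2\times2$ matrices over $\mathbb T$ with lower-left entry $-\infty$, under the max-plus matrix product. A semigroup identity is a pair $u=v$ of nonempty words over an alphabet $\mathcal A$; a semigroup $\mathcal S$ satisfies it if $\phi(u)=\phi(v)$ for every semigroup homomorphism $\phi:\mathcal A^+\to\mathcal S$. *)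

From mathcomp Require Import all_boot.
From Stdlib Require Import Reals.

Set Implicit Arguments.
Unset Strict Implicit.
Unset Printing Implicit Defensive.

(* None represents -oo. *)
Definition trop := option R.

Definition tadd (x y : trop) : trop :=
  match x, y with
  | None, _ => y
  | _, None => x
  | Some a, Some b => Some (Rmax a b)
  end.

Definition tmul (x y : trop) : trop :=
  match x, y with
  | Some a, Some b => Some (Rplus a b)
  | _, _ => None
  end.

Definition tzero : trop := None.
Definition tone : trop := Some 0%R.

Record mat2 := Mat2 { m11 : trop; m12 : trop; m21 : trop; m22 : trop }.

Definition mat2_mul (A B : mat2) : mat2 :=
  Mat2 (tadd (tmul (m11 A) (m11 B)) (tmul (m12 A) (m21 B)))
       (tadd (tmul (m11 A) (m12 B)) (tmul (m12 A) (m22 B)))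
       (tadd (tmul (m21 A) (m11 B)) (tmul (m22 A) (m21 B)))
       (tadd (tmul (m21 A) (m12 B)) (tmul (m22 A) (m22 B))).

Definition mat2_one : mat2 := Mat2 tone tzero tzero tone.

Definition is_U2 (A : mat2) : Prop := m21 A = None.

Definition mat2_eval (X : Type) (phi : X -> mat2) (w : seq X) : mat2 :=
  foldr (fun a acc => mat2_mul (phi a) acc) mat2_one w.

Definition U2T_satisfies (X : Type) (u v : seq X) : Prop :=
  forall phi : X -> mat2, (forall x, is_U2 (phi x)) ->
    mat2_eval phi u = mat2_eval phi v.

(* Generators a_1..a_n are the ordinals of 'I_n (0-based, same order).
   Ch_n = free monoid seq 'I_n modulo the congruence generated by
   a_j a_k a_i = a_k a_j a_i = a_k a_i a_j  for i <= j <= k. *)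
Inductive ch_cong (n : nat) : seq 'I_n -> seq 'I_n -> Prop :=
  | ch_rel1 (p q : seq 'I_n) (i j k : 'I_n) :
      (i <= j <= k)%N ->
      ch_cong (p ++ [:: j; k; i] ++ q) (p ++ [:: k; j; i] ++ q)
  | ch_rel2 (p q : seq 'I_n) (i j k : 'I_n) :
      (i <= j <= k)%N ->
      ch_cong (p ++ [:: k; j; i] ++ q) (p ++ [:: k; i; j] ++ q)
  | ch_refl (w : seq 'I_n) : ch_cong w w
  | ch_sym (w1 w2 : seq 'I_n) : ch_cong w1 w2 -> ch_cong w2 w1
  | ch_trans (w1 w2 w3 : seq 'I_n) :
      ch_cong w1 w2 -> ch_cong w2 w3 -> ch_cong w1 w3.

(* Ch_n satisfies u = v: for every assignment of elements of Ch_n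
   (given by representative words) to letters, the images of u and v
   are equal in Ch_n. *)
Definition Ch_satisfies (n : nat) (X : Type) (u v : seq X) : Prop :=
  forall phi : X -> seq 'I_n,
    ch_cong (flatten (map phi u)) (flatten (map phi v)).

(* Using the defining relations, every word of Ch_n can be rewritten as a
   staircase row_0 row_1 ... row_(n-1), where row_m = (m e_1) ... (m e_k) m^a with
   all e_i < m; the factors (m e_i) of a row commute, so only the multiset of the e_i
   matters.  Conversely, given thresholds p and q, give a letter y the weight 1 if
   y >= q, -1 if y < p and 0 otherwise.  The matrices [[0, w y], [-oo, w y]] of
   U_2(T) evaluate a word to its total weight and its maximal suffix weight, and both
   are invariant under the relations.  On a staircase with top row row_m and q = m,
   the maximal suffix weight is k + a - #{i | e_i < p}; so these invariants determine
   the top row up to commuting its factors and, by induction, the whole staircase. *)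

From Stdlib Require Import ZArith Lia Reals Lra.
From mathcomp Require Import all_boot zify.

Set Implicit Arguments.
Unset Strict Implicit.
Unset Printing Implicit Defensive.

Local Infix "≡" := ch_cong (at level 70, no associativity).

Lemma nseqSr (T : Type) a (x : T) : nseq a x ++ [:: x] = nseq a.+1 x.
Proof. by elim: a => //= a ->. Qed.

Section ChineseMonoid.

Variable n : nat.
Implicit Types (i j k m x y : 'I_n) (l r w s t u L : seq 'I_n) (a b p q : nat).

Local Notation below b := (fun e : 'I_n => (e < b)%N).

Lemma ch_cong_ctx s t : s ≡ t -> forall l r, l ++ s ++ r ≡ l ++ t ++ r.
Proof.
have reassoc l l' w r' r : l ++ (l' ++ w ++ r') ++ r = (l ++ l') ++ w ++ r' ++ r.
  by rewrite !catA.
elim=> {s t} [l' r' i j k ijk | l' r' i j k ijk | w | s t _ IH | s t w _ IH1 _ IH2] l r.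
- by rewrite !reassoc; apply: ch_rel1.
- by rewrite !reassoc; apply: ch_rel2.
- exact: ch_refl.
- exact: ch_sym.
- exact: ch_trans (IH1 l r) (IH2 l r).
Qed.

Lemma ch_cong_catl l s t : s ≡ t -> l ++ s ≡ l ++ t.
Proof. by move/ch_cong_ctx/(_ l [::]); rewrite !cats0. Qed.

Lemma ch_cong_catr r s t : s ≡ t -> s ++ r ≡ t ++ r.
Proof. by move/ch_cong_ctx/(_ [::] r). Qed.

Lemma ch_cong_cat s1 s2 t1 t2 : s1 ≡ s2 -> t1 ≡ t2 -> s1 ++ t1 ≡ s2 ++ t2.
Proof. by move=> hs ht; apply: ch_trans (ch_cong_catr _ hs) (ch_cong_catl _ ht). Qed.

Lemma ch_cong_invariant (T : Type) (F : seq 'I_n -> T) :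
    (forall s t, F s = F t -> forall l r, F (l ++ s ++ r) = F (l ++ t ++ r)) ->
    (forall i j k, (i <= j <= k)%N ->
       F [:: j; k; i] = F [:: k; j; i] /\ F [:: k; j; i] = F [:: k; i; j]) ->
  forall s t, s ≡ t -> F s = F t.
Proof.
move=> Fctx Frel s t; elim=> {s t} //.
- by move=> l r i j k /Frel[e _]; apply: Fctx e l r.
- by move=> l r i j k /Frel[_ e]; apply: Fctx e l r.
- by move=> s t w _ -> _ ->.
Qed.

Section Relations.

Variables i j k : 'I_n.
Hypothesis ijk : (i <= j <= k)%N.

Lemma ch_jki_kji : [:: j; k; i] ≡ [:: k; j; i].
Proof. exact: ch_rel1 [::] [::] _ _ _ ijk. Qed.

Lemma ch_kji_kij : [:: k; j; i] ≡ [:: k; i; j].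
Proof. exact: ch_rel2 [::] [::] _ _ _ ijk. Qed.

Lemma ch_kij_jki : [:: k; i; j] ≡ [:: j; k; i].
Proof. exact: ch_sym (ch_trans ch_jki_kji ch_kji_kij). Qed.

End Relations.

Lemma ch_swap_after_top m x y : (x <= m)%N -> (y <= m)%N -> [:: m; x; y] ≡ [:: m; y; x].
Proof.
move=> xm ym; case: (leqP x y) => [xy | /ltnW yx].
- by apply: ch_sym; apply: ch_kji_kij; rewrite xy.
- by apply: ch_kji_kij; rewrite yx.
Qed.

Lemma ch_pair_top_comm m x : (x <= m)%N -> [:: m; x; m] ≡ [:: m; m; x].
Proof. by move=> xm; apply: ch_sym; apply: ch_kji_kij; rewrite xm leqnn. Qed.

Lemma ch_pair_swap m x y : (x <= m)%N -> (y <= m)%N ->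
  [:: m; x; m; y] ≡ [:: m; y; m; x].
Proof.
move=> xm ym.
apply: ch_trans (ch_cong_catr [:: y] (ch_pair_top_comm xm)) _.
apply: ch_trans (ch_cong_catl [:: m] (ch_swap_after_top xm ym)) _.
exact: (ch_cong_catr [:: x] (ch_sym (ch_pair_top_comm ym))).
Qed.

Definition pairs m L := flatten [seq [:: m; e] | e <- L].

Definition row m L a := pairs m L ++ nseq a m.

Lemma pairs_cons m e L : pairs m (e :: L) = [:: m; e] ++ pairs m L.
Proof. by []. Qed.

Lemma pairs_cat m L1 L2 : pairs m (L1 ++ L2) = pairs m L1 ++ pairs m L2.
Proof. by rewrite /pairs map_cat flatten_cat. Qed.

Lemma pairs_rcons m L x : pairs m (rcons L x) = pairs m L ++ [:: m; x].
Proof. by rewrite -cats1 pairs_cat. Qed.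

Lemma pairs_comm m x L : (x < m)%N -> all (below m) L ->
  pairs m L ++ [:: m; x] ≡ [:: m; x] ++ pairs m L.
Proof.
move=> xm; elim: L => [|e L IH] /=; first by move=> _; apply: ch_refl.
case/andP=> em /IH comm.
apply: ch_trans (ch_cong_catl [:: m; e] comm) _.
exact: (ch_cong_catr (pairs m L) (ch_pair_swap (ltnW em) (ltnW xm))).
Qed.

Lemma pairs_perm m L1 L2 : all (below m) L1 -> perm_eq L1 L2 ->
  pairs m L1 ≡ pairs m L2.
Proof.
elim: L1 L2 => [|x L1 IH] L2 /=.
  by move=> _; rewrite perm_sym => /perm_nilP->; apply: ch_refl.
case/andP=> xm L1m perm12.
have x_L2 : x \in L2 by rewrite -(perm_mem perm12) mem_head.
move: perm12; case/splitPr: x_L2 => L2a L2b.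
rewrite perm_sym -[x :: L2b]cat1s perm_catCA perm_cons perm_sym => perm12.
have L2m : all (below m) (L2a ++ L2b) by rewrite -(perm_all _ perm12).
rewrite cat1s pairs_cat !pairs_cons.
apply: ch_trans (ch_cong_catl [:: m; x] (IH _ L1m perm12)) _.
rewrite pairs_cat !catA; apply: ch_cong_catr; apply: ch_sym; apply: pairs_comm => //.
by move: L2m; rewrite all_cat => /andP[].
Qed.

Lemma nseq_pair_comm m x a : (x <= m)%N -> nseq a m ++ [:: m; x] ≡ [:: m; x] ++ nseq a m.
Proof.
move=> xm; elim: a => [|a IH]; first by rewrite cats0; apply: ch_refl.
apply: ch_trans (ch_cong_catl [:: m] IH) _.
exact: (ch_cong_catr (nseq a m) (ch_sym (ch_pair_top_comm xm))).
Qed.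

Lemma pairs_emit m x L : (x < m)%N -> all (below m) L ->
  exists y L', [/\ (y < m)%N, all (below m) L' & pairs m L ++ [:: x] ≡ y :: pairs m L'].
Proof.
move=> xm; elim: L => [|e L IH]; first by exists x, [::]; split=> //; apply: ch_refl.
case/andP=> em /IH[y [L' [ym L'm emit]]].
have shift : pairs m (e :: L) ++ [:: x] ≡ [:: m; e; y] ++ pairs m L'.
  exact: (ch_cong_catl [:: m; e] emit).
case: (leqP e y) => [ey | ye].
- exists y, (e :: L'); split; [done | by rewrite /= em | ].
  have eym : (e <= y <= m)%N by rewrite ey ltnW.
  exact: (ch_trans shift (ch_cong_catr (pairs m L') (ch_kij_jki eym))).
- exists e, (y :: L'); split; [done | by rewrite /= ym | ].
  have yem : (y <= e <= m)%N by rewrite (ltnW ye) (ltnW em).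
  have rotate := ch_trans (ch_kji_kij yem) (ch_kij_jki yem).
  exact: (ch_trans shift (ch_cong_catr (pairs m L') rotate)).
Qed.

Lemma row_rcons m x L a : (x <= m)%N -> all (below m) L ->
  exists ys L' a',
    [/\ all (below m) ys, all (below m) L' & row m L a ++ [:: x] ≡ ys ++ row m L' a'].
Proof.
rewrite leq_eqVlt => /orP[/eqP/val_inj-> | xm] Lm.
  exists [::], L, a.+1; split=> //.
  by rewrite /row -catA nseqSr; apply: ch_refl.
case: a => [|a].
- have [y [L' [ym L'm emit]]] := pairs_emit xm Lm.
  exists [:: y], L', 0; split; [by rewrite /= ym | done | ].
  by rewrite /row !cats0.
- exists [::], (rcons L x), a; split; [done | by rewrite all_rcons xm | ].
  rewrite /row pairs_rcons -!catA; apply: ch_cong_catl.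
  rewrite -nseqSr -catA.
  exact: (nseq_pair_comm a (ltnW xm)).
Qed.

Lemma row_perm m L1 L2 a : all (below m) L1 -> perm_eq L1 L2 -> row m L1 a ≡ row m L2 a.
Proof. by move=> L1m /(pairs_perm L1m); apply: ch_cong_catr. Qed.

Lemma top_row_split m w : all (below m.+1) w ->
  exists u L a, [/\ all (below m) u, all (below m) L & w ≡ u ++ row m L a].
Proof.
elim/last_ind: w => [|w x IH]; first by exists [::], [::], 0; split=> //; apply: ch_refl.
rewrite all_rcons => /andP[xm /IH[u [L [a [um Lm split_w]]]]].
have [ys [L' [a' [ysm L'm step]]]] := row_rcons a xm Lm.
exists (u ++ ys), L', a'; split; [by rewrite all_cat um | done | ].
rewrite -cats1 -catA; apply: ch_trans (ch_cong_catr [:: x] split_w) _.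
by rewrite -catA; apply: ch_cong_catl.
Qed.

Inductive staircase : nat -> seq 'I_n -> Prop :=
  | staircase_nil : staircase 0 [::]
  | staircase_row u m L a : staircase m u -> all (below m) L ->
      staircase m.+1 (u ++ row m L a).

Lemma staircase_exists b w : (b <= n)%N -> all (below b) w ->
  exists2 s, staircase b s & w ≡ s.
Proof.
elim: b w => [|b IH] w bn.
  by case: w => // _; exists [::]; [apply: staircase_nil | apply: ch_refl].
pose m : 'I_n := Ordinal bn.
move=> /(@top_row_split m)[u [L [a [um Lm split_w]]]].
have [s stair_s us] := IH u (ltnW bn) um.
exists (s ++ row m L a); first exact: (@staircase_row s m L a stair_s Lm).
exact: ch_trans split_w (ch_cong_catr _ us).
Qed.

Lemma staircase_below b s : staircase b s -> all (below b) s.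
Proof.
elim=> {b s} // u m L a _ um Lm; rewrite all_cat /row all_cat.
rewrite (sub_all _ um) => [|e /ltnW //]; rewrite all_nseq ltnSn orbT andbT.
by elim: L Lm => //= e L IH /andP[em /IH->]; rewrite ltnSn ltnW.
Qed.

Definition weight p q (y : nat) : Z :=
  if (q <= y)%N then 1%Z else if (y < p)%N then (-1)%Z else 0%Z.

Fixpoint wsum p q w : Z :=
  if w is y :: w' then (weight p q y + wsum p q w')%Z else 0%Z.

Fixpoint wmax p q w : Z :=
  if w is y :: w' then Z.max (wmax p q w') (weight p q y + wsum p q w') else 0%Z.

Definition weights p q w := (wsum p q w, wmax p q w).

Lemma weight_below p q y : (y < q)%N -> weight p q y = (if (y < p)%N then -1 else 0)%Z.
Proof. by move=> yq; rewrite /weight leqNgt yq. Qed.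

Lemma weight_bounds p q y : (-1 <= weight p q y <= 1)%Z.
Proof. by rewrite /weight; case: ifP => _; last case: ifP => _; lia. Qed.

Lemma weight_mono p q y z : (y <= z)%N -> (weight p q y <= weight p q z)%Z.
Proof.
by rewrite /weight; case: (leqP q y); case: (leqP q z); case: (ltnP y p); case: (ltnP z p); lia.
Qed.

Lemma wsum_cat p q s t : wsum p q (s ++ t) = (wsum p q s + wsum p q t)%Z.
Proof. by elim: s => [|y s IH] /=; lia. Qed.

Lemma wmax_ge0 p q w : (0 <= wmax p q w)%Z.
Proof. by elim: w => [|y w IH] /=; lia. Qed.

Lemma wsum_le_wmax p q w : (wsum p q w <= wmax p q w)%Z.
Proof. by case: w => [|y w] /=; lia. Qed.

Lemma wmax_cat p q s t :
  wmax p q (s ++ t) = Z.max (wmax p q t) (wsum p q t + wmax p q s).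
Proof.
elim: s => [|y s IH] /=; first by have := @wsum_le_wmax p q t; lia.
by rewrite IH wsum_cat; lia.
Qed.

Lemma ch_cong_weights p q s t : s ≡ t -> weights p q s = weights p q t.
Proof.
apply: ch_cong_invariant => [s' t' [es em] l r | i j k /andP[ij jk]].
  by rewrite /weights !wmax_cat !wsum_cat es em.
have := @weight_mono p q _ _ ij; have := @weight_mono p q _ _ jk.
have := @weight_bounds p q i; have := @weight_bounds p q j; have := @weight_bounds p q k.
by rewrite /weights /=; split; congr pair; lia.
Qed.

Lemma wmax_below p q w : all (below q) w -> wmax p q w = 0%Z.
Proof.
elim: w => [|y w IH] //= /andP[yq /IH wmax0]; rewrite wmax0 weight_below //.
by have := @wsum_le_wmax p q w; rewrite wmax0; case: (y < p)%N; lia.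
Qed.

Lemma wmax_row p q m L a : (q <= m)%N -> wmax p q (row m L a) = wsum p q (row m L a).
Proof.
move=> qm; have wm : weight p q m = 1%Z by rewrite /weight qm.
have wmax_pairs : wmax p q (pairs m L) = wsum p q (pairs m L).
  elim: L => [|e L IH] //=; rewrite -/(pairs m L) IH wm.
  by have := @weight_bounds p q e; lia.
have wmax_nseq : wmax p q (nseq a m) = wsum p q (nseq a m).
  by elim: a => [|a' IH] //=; rewrite IH wm; lia.
rewrite /row wmax_cat wsum_cat wmax_nseq.
by have := @wmax_ge0 p q (pairs m L); rewrite wmax_pairs; lia.
Qed.

Lemma wmax_cat_row p q u m L a : (q <= m)%N ->
  wmax p q (u ++ row m L a) = (wsum p q (row m L a) + wmax p q u)%Z.
Proof. by move=> qm; rewrite wmax_cat wmax_row //; have := @wmax_ge0 p q u; lia. Qed.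

Lemma wsum_top_row p m L a : all (below m) L ->
  wsum p m (row m L a) = (Z.of_nat (size L + a) - Z.of_nat (count (below p) L))%Z.
Proof.
move=> Lm; have wm : weight p m m = 1%Z by rewrite /weight leqnn.
rewrite /row wsum_cat.
have -> : wsum p m (nseq a m) = Z.of_nat a by elim: a => [|a IH] //=; rewrite IH wm; lia.
elim: L Lm => [|e L IH]; first by move=> _ /=; lia.
case/andP=> em /IH IH'; rewrite pairs_cons wsum_cat [size _]/= [count _ _]/=.
have -> : wsum p m [:: m; e] = (1 + weight p m e)%Z by rewrite /= wm Z.add_0_r.
by rewrite weight_below //; case: (e < p)%N; lia.
Qed.

Lemma wmax_top_row p u m L a : all (below m) u -> all (below m) L ->
  wmax p m (u ++ row m L a) = (Z.of_nat (size L + a) - Z.of_nat (count (below p) L))%Z.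
Proof. by move=> um Lm; rewrite wmax_cat_row // wmax_below // wsum_top_row //; lia. Qed.

Lemma weights_cancel_row u1 u2 m L a : all (below m) u1 -> all (below m) u2 ->
    (forall p q, weights p q (u1 ++ row m L a) = weights p q (u2 ++ row m L a)) ->
  forall p q, weights p q u1 = weights p q u2.
Proof.
move=> u1m u2m eq_weights p q; case: (eq_weights p q); rewrite !wsum_cat => es em.
rewrite /weights; congr pair; first by lia.
case: (leqP q m) => [qm | mq]; first by move: em; rewrite !wmax_cat_row //; lia.
by rewrite !wmax_below // (sub_all _ u1m, sub_all _ u2m) // => e /ltn_trans->.
Qed.

Lemma count_below_succ x s :
  count (below x.+1) s = (count_mem x s + count (below x) s)%N.
Proof.
elim: s => [|e s IH] //=; rewrite IH ltnS leq_eqVlt.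
case: (ltngtP e x) => [ex | xe | /val_inj ->]; last by rewrite eqxx /=; lia.
- have ne : (e == x) = false by apply/eqP=> ex'; rewrite ex' ltnn in ex.
  by rewrite ne /=; lia.
- have ne : (e == x) = false by apply/eqP=> ex'; rewrite ex' ltnn in xe.
  by rewrite ne.
Qed.

Lemma perm_eq_count_below s1 s2 :
  (forall b, count (below b) s1 = count (below b) s2) -> perm_eq s1 s2.
Proof.
move=> eq_count; apply/allP => x _; apply/eqP.
by have := eq_count x.+1; rewrite !count_below_succ eq_count => /addIn.
Qed.

Lemma staircase_weights_cong b s1 s2 : staircase b s1 -> staircase b s2 ->
  (forall p q, weights p q s1 = weights p q s2) -> s1 ≡ s2.
Proof.
move=> st1; elim: st1 s2 => {b s1} [|u1 m L1 a1 st_u1 IH L1m] s2 st2 eq_weights.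
  by inversion st2; apply: ch_refl.
inversion st2 as [|u2 m2 L2 a2 st_u2 L2m m2m s2E]; subst s2.
move/val_inj: m2m => m2m; subst m2.
have u1m := staircase_below st_u1; have u2m := staircase_below st_u2.
have top_count p : (Z.of_nat (size L1 + a1) - Z.of_nat (count (below p) L1) =
                    Z.of_nat (size L2 + a2) - Z.of_nat (count (below p) L2))%Z.
  by case: (eq_weights p m); rewrite !wmax_top_row.
have count0 L : count (below 0) L = 0%N by elim: L => //= e L ->; rewrite ltn0.
have countm L : all (below m) L -> count (below m) L = size L.
  by move=> Lm; apply/eqP; rewrite -all_count.
have := top_count 0; have := top_count m; rewrite !count0 !countm // => top_m top_0.
have eq_a : a1 = a2 by lia.
have eq_L : perm_eq L1 L2 by apply: perm_eq_count_below => p; have := top_count p; lia.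
have rows : row m L1 a1 ≡ row m L2 a2 by rewrite -eq_a; apply: row_perm.
have eq_weights_u p q : weights p q u1 = weights p q u2.
  apply: (weights_cancel_row (L := L2) (a := a2) u1m u2m) => {}p {}q.
  by rewrite -(eq_weights p q); apply/ch_cong_weights/ch_cong_catl/ch_sym.
exact: ch_cong_cat (IH _ st_u2 eq_weights_u) rows.
Qed.

End ChineseMonoid.

Section TropicalMatrices.

Local Open Scope R_scope.

Lemma Rplus_max_distr_l (r a b : R) : r + Rmax a b = Rmax (r + a) (r + b).
Proof. by rewrite /Rmax; case: Rle_dec => ?; case: Rle_dec => ?; lra. Qed.

Lemma Rmax_IZR a b : Rmax (IZR a) (IZR b) = IZR (Z.max a b).
Proof.
case: (Z.le_ge_cases a b) => ab.
  by rewrite Rmax_right ?Z.max_r //; apply: IZR_le.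
by rewrite Rmax_left ?Z.max_l //; apply: IZR_le; lia.
Qed.

Lemma taddC x y : tadd x y = tadd y x.
Proof. by case: x => [a|]; case: y => [b|] //=; rewrite Rmax_comm. Qed.

Lemma taddA x y z : tadd x (tadd y z) = tadd (tadd x y) z.
Proof. by case: x => [a|]; case: y => [b|]; case: z => [c|] //=; rewrite Rmax_assoc. Qed.

Lemma taddACA x y z t : tadd (tadd x y) (tadd z t) = tadd (tadd x z) (tadd y t).
Proof. by rewrite -!taddA (taddA y) (taddC y z) -taddA. Qed.

Lemma tmulC x y : tmul x y = tmul y x.
Proof. by case: x => [a|]; case: y => [b|] //=; rewrite Rplus_comm. Qed.

Lemma tmulA x y z : tmul x (tmul y z) = tmul (tmul x y) z.
Proof. by case: x => [a|]; case: y => [b|]; case: z => [c|] //=; rewrite Rplus_assoc. Qed.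

Lemma tmul1l x : tmul tone x = x.
Proof. by case: x => [a|] //=; rewrite Rplus_0_l. Qed.

Lemma tmulDr x y z : tmul x (tadd y z) = tadd (tmul x y) (tmul x z).
Proof.
by case: x => [a|]; case: y => [b|]; case: z => [c|] //=; rewrite Rplus_max_distr_l.
Qed.

Lemma tmulDl x y z : tmul (tadd x y) z = tadd (tmul x z) (tmul y z).
Proof. by rewrite !(tmulC _ z) tmulDr. Qed.

Lemma mat2_mulA A B C : mat2_mul A (mat2_mul B C) = mat2_mul (mat2_mul A B) C.
Proof.
case: A B C => [a1 a2 a3 a4] [b1 b2 b3 b4] [c1 c2 c3 c4].
by rewrite /mat2_mul /= !tmulDr !tmulDl !tmulA; congr Mat2; rewrite taddACA.
Qed.

Lemma mat2_mul1l A : mat2_mul mat2_one A = A.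
Proof. by case: A => [[a1|] [a2|] [a3|] [a4|]]; rewrite /mat2_mul /= ?Rplus_0_l. Qed.

Lemma mat2_eval_cat (T : Type) (rho : T -> mat2) s t :
  mat2_eval rho (s ++ t) = mat2_mul (mat2_eval rho s) (mat2_eval rho t).
Proof. by elim: s => [|x s IH] /=; rewrite ?mat2_mul1l // IH mat2_mulA. Qed.

Lemma mat2_eval_flatten (T U : Type) (rho : U -> mat2) (phi : T -> seq U) w :
  mat2_eval (fun x => mat2_eval rho (phi x)) w = mat2_eval rho (flatten (map phi w)).
Proof. by elim: w => [|x w IH] //=; rewrite IH mat2_eval_cat. Qed.

Lemma mat2_eval_U2 (T : Type) (rho : T -> mat2) w :
  (forall x, is_U2 (rho x)) -> is_U2 (mat2_eval rho w).
Proof.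
rewrite /is_U2 => rhoU2; elim: w => [|x w IH] //=.
by rewrite IH rhoU2; case: (m22 (rho x)).
Qed.

End TropicalMatrices.

Definition weight_mat n p q (y : 'I_n) : mat2 :=
  Mat2 tone (Some (IZR (weight p q y))) tzero (Some (IZR (weight p q y))).

(* The top-right entry is the maximal weight sum over the nonempty suffixes;
   adding the tropical unit accounts for the empty one. *)
Lemma mat2_eval_weight n p q (w : seq 'I_n) : exists e,
  mat2_eval (weight_mat p q) w = Mat2 tone e tzero (Some (IZR (wsum p q w))) /\
  tadd tone e = Some (IZR (wmax p q w)).
Proof.
elim: w => [|y w [e [eval_w max_e]]]; first by exists tzero.
exists (tadd e (Some (IZR (weight p q y + wsum p q w)))); split.
  by rewrite [mat2_eval _ _]/= eval_w /mat2_mul !tmul1l /= plus_IZR.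
by rewrite taddA max_e /= Rmax_IZR.
Qed.

Theorem corollaryI (n : nat) (Hn : (0 < n)%N) (X : Type) (u v : seq X) :
  u <> [::] -> v <> [::] ->
  U2T_satisfies u v -> Ch_satisfies n u v.
Proof.
move=> _ _ sat phi; set w1 := flatten _; set w2 := flatten _.
have eval_eq rho : (forall y, is_U2 (rho y)) -> mat2_eval rho w1 = mat2_eval rho w2.
  by move=> rhoU2; rewrite -!mat2_eval_flatten; apply: sat => x; apply: mat2_eval_U2.
have eq_weights p q : weights p q w1 = weights p q w2.
  have [e1 [eval1 max1]] := mat2_eval_weight p q w1.
  have [e2 [eval2 max2]] := mat2_eval_weight p q w2.
  have := eval_eq (weight_mat p q) (fun y => erefl).
  rewrite eval1 eval2 => -[eq_e /eq_IZR eq_sum].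
  by rewrite /weights eq_sum; congr pair; apply: eq_IZR; congruence.
have all_below w : all (fun e : 'I_n => (e < n)%N) w by apply/allP => e _; apply: ltn_ord.
have [s1 stair1 w1s1] := staircase_exists (leqnn n) (all_below w1).
have [s2 stair2 w2s2] := staircase_exists (leqnn n) (all_below w2).
have s1s2 : s1 ≡ s2.
  apply: staircase_weights_cong stair1 stair2 _ => p q.
  by rewrite -(ch_cong_weights _ _ w1s1) -(ch_cong_weights _ _ w2s2).
exact: ch_trans w1s1 (ch_trans s1s2 (ch_sym w2s2)).
Qed.
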